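(* Let $p,q,e$ be positive integers. If $n>1$ is the length of a cycle of the Cat map over $\mathbb{Z}_{2^e}$, then $H_n$ is even.
   Context: $\mathbf{C}=\begin{bmatrix}1 & p\\ q & 1+pq\end{bmatrix}$; the Cat map over $\mathbb{Z}_{2^e}$ is the bijection $v\mapsto\mathbf{C}v\bmod 2^e$ of $\mathbb{Z}_{2^e}^2$, and a cycle of length $n$ is the orbit of a point $v$ for which $n$ is the least positive integer with $\mathbf{C}^nv\equiv v\pmod{2^e}$. $A=pq+2$, $B=\sqrt{A^2-4}$, $H_n=\frac{1}{B}\left(\left(\frac{A+B}{2}\right)^n-\left(\frac{A-B}{2}\right)^n\right)$ (an integer). *)

From mathcomp Require Import all_boot all_order all_algebra all_field.
Set Implicit Arguments. Unset Strict Implicit. Unset Printing Implicit Defensive.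
Import GRing.Theory Num.Theory.
Local Open Scope ring_scope.

Definition catmx (p q e : nat) : 'M['Z_(2 ^ e)]_2 :=
  \matrix_(i < 2, j < 2)
    if i == 0 :> 'I_2 then (if j == 0 :> 'I_2 then 1 else p%:R)
    else (if j == 0 :> 'I_2 then q%:R else 1 + (p * q)%:R).

Definition is_cycle_length (p q e n : nat) : Prop :=
  exists v : 'cV['Z_(2 ^ e)]_2,
    (0 < n)%N /\ (catmx p q e) ^+ n *m v = v /\
    forall m : nat, (0 < m < n)%N -> (catmx p q e) ^+ m *m v != v.

Definition catA (p q : nat) : algC := (p * q + 2)%:R.
Definition catB (p q : nat) : algC := sqrtC (catA p q ^+ 2 - 4).
Definition catH (p q n : nat) : algC :=
  (((catA p q + catB p q) / 2) ^+ n - ((catA p q - catB p q) / 2) ^+ n) / catB p q.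

From Pilot Require Import Defs.
From mathcomp Require Import all_boot all_order all_algebra all_field.
From mathcomp Require Import ring zify.
Set Implicit Arguments. Unset Strict Implicit. Unset Printing Implicit Defensive.
Import GRing.Theory Num.Theory.
Local Open Scope ring_scope.

(* By Cayley-Hamilton C^2 = A C - 1, so C^(k+1) = U_(k+1) C - U_k for the
   Lucas sequence U_0 = 0, U_1 = 1, U_(k+2) = A U_(k+1) - U_k, and H_n = U_n.
   If pq is even then C^2 = 1 + 2X, hence C^(2^(e+1)) = 1 over Z/2^e: every
   cycle length divides 2^(e+1), so a length n > 1 is even, and U_n is even
   because A is.  If pq is odd then det (C^n - 1) = 2 + 2 U_(n-1) - A U_n; were
   U_n odd, this determinant would be a unit of Z/2^e, so C^n v = v would force
   v = 0, whose cycle has length 1. *)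

Fixpoint lucasU (a : int) (n : nat) : int :=
  match n with
  | 0 => 0
  | 1 => 1
  | (n'.+1 as m).+1 => a * lucasU a m - lucasU a n'
  end.

Lemma lucasUSS a n : lucasU a n.+2 = a * lucasU a n.+1 - lucasU a n.
Proof. by []. Qed.

Lemma lucasU_cassini a n :
  lucasU a n.+1 ^+ 2 - a * lucasU a n.+1 * lucasU a n + lucasU a n ^+ 2 = 1.
Proof.
by elim: n => [|n IH]; [rewrite /=; ring | rewrite lucasUSS -[RHS]IH; ring].
Qed.

Lemma dvd2_lucasU_double a k : (2 %| a)%Z -> (2 %| lucasU a k.*2)%Z.
Proof.
by move=> a_even; elim: k => [|k IH] //; rewrite doubleS lucasUSS rpredB ?dvdz_mulr.
Qed.

Lemma expr_lucasU (R : pzRingType) (a : int) (x : R) :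
  x ^+ 2 = x *~ a - 1 -> forall n, x ^+ n.+1 = x *~ lucasU a n.+1 - (lucasU a n)%:~R.
Proof.
move=> x2; elim=> [|n IH]; first by rewrite expr1 mulr1z subr0.
rewrite exprSr IH mulrBl mulrzAl -expr2 x2 mulrzl mulrzBl -mulrzA.
by rewrite lucasUSS mulrzBr addrAC.
Qed.

Lemma expr1plus2_pow2 (R : pzRingType) (x : R) k :
  exists y, (1 + x *+ 2) ^+ (2 ^ k) = 1 + y *+ 2 ^ k.+1.
Proof.
elim: k => [|k [y IH]]; first by exists x; rewrite expr1.
exists (y + y * y *+ 2 ^ k).
rewrite expnS mulnC exprM IH expr2 mulrDl mul1r mulrDr mulr1 mulrnAl mulrnAr -mulrnA.
rewrite -addrA; congr (1 + _); rewrite addrA -mulrnDr mulrnDl -mulrnA.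
by congr (y *+ _ + _ *+ _); rewrite !expnS; lia.
Qed.

Lemma expr1plus2_pow2_eq1 (R : pzRingType) e (x : R) :
  (2 ^ e)%:R = 0 :> R -> (1 + x *+ 2) ^+ (2 ^ e) = 1.
Proof.
move=> char2e; have [y ->] := expr1plus2_pow2 x e.
by rewrite expnSr mulnC mulrnA -mulr_natr char2e mulr0 addr0.
Qed.

Lemma unitr_odd_int (R : unitRingType) e (d : int) :
  (2 ^ e)%:R = 0 :> R -> ~~ (2 %| d)%Z -> (d%:~R : R) \is a GRing.unit.
Proof.
move=> char2e d_odd; have -> : d = 1 + (d %/ 2)%Z *+ 2 by rewrite mulr2n; lia.
rewrite -(unitrX_pos _ (expn_gt0 2 e)) rmorphD rmorph1 rmorphMn.
by rewrite expr1plus2_pow2_eq1 ?unitr1.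
Qed.

Lemma det_mx22 (R : comPzRingType) (M : 'M[R]_2) :
  \det M = M 0 0 * M 1 1 - M 0 1 * M 1 0.
Proof.
rewrite (expand_det_row _ 0) !big_ord_recl big_ord0 /cofactor !det_mx11 !mxE /=.
rewrite addr0 expr0 expr1 mul1r mulN1r mulrN.
by congr (M _ _ * M _ _ - M _ _ * M _ _); apply/val_inj.
Qed.

Lemma natr_pow2_Zp e : (0 < e)%N -> (2 ^ e)%:R = 0 :> 'Z_(2 ^ e).
Proof. by move=> e_gt0; rewrite pchar_Zp // -{1}(expn0 2) ltn_exp2l. Qed.

Lemma natr_pow2_mx_Zp e k : (0 < e)%N -> (2 ^ e)%:R = 0 :> 'M['Z_(2 ^ e)]_k.+1.
Proof. by move=> e_gt0; rewrite -scaler_nat natr_pow2_Zp ?scale0r. Qed.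

Lemma mxexp_period_dvdn (R : pzRingType) k (M : 'M[R]_k.+1) (v : 'cV[R]_k.+1) n m :
  (0 < n)%N -> M ^+ n *m v = v -> (forall i, (0 < i < n)%N -> M ^+ i *m v != v) ->
  M ^+ m *m v = v -> (n %| m)%N.
Proof.
move=> n_gt0 Mnv n_min Mmv.
have Mdnv d : M ^+ (d * n) *m v = v.
  by elim: d => [|d IH]; rewrite ?mul1mx // mulSn exprD -mulmxE -mulmxA IH Mnv.
have Mrv : M ^+ (m %% n) *m v = v.
  by rewrite -[RHS]Mmv [in RHS](divn_eq m n) addnC exprD -mulmxE -mulmxA Mdnv.
apply: contraT; rewrite /dvdn -lt0n => r_gt0.
by have := n_min (m %% n)%N; rewrite r_gt0 ltn_mod n_gt0 Mrv eqxx; apply.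
Qed.

Lemma catH_lucasU p q n :
  (0 < p * q)%N -> catH p q n = (lucasU (p * q + 2)%:Z n)%:~R.
Proof.
move=> pq_gt0; rewrite /catH; set A := Defs.catA p q; set B := catB p q.
have B2 : B ^+ 2 = A ^+ 2 - 4 by rewrite sqrtCK.
have B_neq0 : B != 0.
  apply/eqP => B0; move/eqP: B2; rewrite B0 expr0n eq_sym subr_eq0 -natrX eqr_nat.
  move=> /eqP; nia.
set al := (A + B) / 2; set be := (A - B) / 2.
have sum_al_be : al + be = A by rewrite /al /be; field.
have mul_al_be : al * be = 1.
  have -> : al * be = (A ^+ 2 - B ^+ 2) / 4 by rewrite /al /be; field.
  by rewrite B2; field.
have root x y : x + y = A -> x * y = 1 -> x ^+ 2 = x *~ (p * q + 2)%:Z - 1.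
  by move=> xy_sum xy_mul; rewrite -mulrzr -[_%:~R]/A -xy_sum -xy_mul; ring.
case: n => [|n]; first by rewrite !expr0 subrr mul0r.
rewrite (expr_lucasU (root al be _ _)) //.
rewrite (expr_lucasU (root be al _ _)) ?(addrC be) ?(mulrC be) //.
rewrite opprB addrA subrK -mulrzBl.
have -> : al - be = B by rewrite /al /be; field.
by rewrite -mulrzl mulfK.
Qed.

Section CatMap.
Variables p q e : nat.
Local Notation C := (catmx p q e).
Local Notation a := (p * q + 2)%:Z.

Lemma catmx_sqr : C ^+ 2 = C *~ a - 1.
Proof.
apply/matrixP => i j; rewrite expr2 -mulmxE -scaler_int !mxE !big_ord_recl big_ord0 !mxE.
by case: i => [[|[|//]] ?]; case: j => [[|[|//]] ?] /=; rewrite ?natrD ?natrM; ring.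
Qed.

Lemma catmx_expr n : C ^+ n.+1 = C *~ lucasU a n.+1 - (lucasU a n)%:~R.
Proof. exact: expr_lucasU catmx_sqr n. Qed.

Lemma catmx_expr_pow2 : (0 < e)%N -> (2 %| p * q)%N -> C ^+ (2 ^ e.+1) = 1.
Proof.
move=> e_gt0 /dvdnP[b pq_eq].
have C2 : C ^+ 2 = 1 + (C *~ (b + 1)%:Z - 1) *+ 2.
  have a_eq : a = (b + 1)%:Z + (b + 1)%:Z by rewrite pq_eq; lia.
  by rewrite catmx_sqr a_eq mulr2n addrACA -mulrzDr addrCA addNKr.
rewrite expnS exprM C2 expr1plus2_pow2_eq1 //.
exact: natr_pow2_mx_Zp.
Qed.

Lemma det_catmx_expr_sub1 n :
  \det (C ^+ n.+1 - 1) = (2 + 2 * lucasU a n - a * lucasU a n.+1)%:~R.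
Proof.
have cass := lucasU_cassini a n.
rewrite catmx_expr det_mx22; set x := lucasU a n.+1; set y := lucasU a n.
have -> : 2 + 2 * y - a * x =
    (x - y - 1) * (x * (1 + (p * q)%:Z) - y - 1) - (x * p%:Z) * (x * q%:Z).
  by move: cass; rewrite -/x -/y; nia.
by rewrite -!scaler_int !mxE /=; ring.
Qed.

Lemma catmx_fixed_eq0 n (v : 'cV['Z_(2 ^ e)]_2) : (0 < e)%N -> odd (p * q) ->
  ~~ (2 %| lucasU a n.+1)%Z -> C ^+ n.+1 *m v = v -> v = 0.
Proof.
move=> e_gt0 pq_odd x_odd Cv.
have ax_odd : ~~ (2 %| a * lucasU a n.+1)%Z.
  by rewrite Gauss_dvdzr //; have := coprime2n (p * q + 2); rewrite addn2 /= pq_odd.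
have unit_mx : C ^+ n.+1 - 1 \in unitmx.
  rewrite unitmxE det_catmx_expr_sub1 (unitr_odd_int (natr_pow2_Zp e_gt0)) //.
  by rewrite rpredBl // rpredD ?dvdz_mulr ?dvdzz.
by rewrite -(mulKmx unit_mx v) mulmxBl mul1mx Cv subrr mulmx0.
Qed.
End CatMap.

Theorem proposition5 (p q e n : nat) :
  (0 < p)%N -> (0 < q)%N -> (0 < e)%N -> (1 < n)%N ->
  is_cycle_length p q e n ->
  exists k : int, catH p q n = (2 * k)%:~R.
Proof.
move=> p_gt0 q_gt0 e_gt0 n_gt1 [v [n_gt0 [Cnv n_min]]].
rewrite catH_lucasU ?muln_gt0 ?p_gt0 //.
suff /dvdzP[k ->] : (2 %| lucasU (p * q + 2)%:Z n)%Z by exists k; rewrite mulrC.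
have [pq_odd | pq_even] := boolP (odd (p * q)).
- case: n n_gt1 Cnv n_min {n_gt0} => [//|n] n_gt1 Cnv n_min.
  apply: contraT => U_odd; have v0 := catmx_fixed_eq0 e_gt0 pq_odd U_odd Cnv.
  by have := n_min 1%N; rewrite n_gt1 v0 mulmx0 eqxx => /(_ isT).
- have Cv : catmx p q e ^+ (2 ^ e.+1) *m v = v.
    by rewrite catmx_expr_pow2 ?mul1mx ?dvdn2.
  have /dvdn_pfactor[//|k _ n_eq] := mxexp_period_dvdn n_gt0 Cnv n_min Cv.
  case: k n_eq n_gt1 => [-> //|k ->] _; rewrite expnS mul2n.
  by apply: dvd2_lucasU_double; lia.
Qed.
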